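(* Let $\mu$ be a probability measure and $\beta:\mathbb R^+\to\mathbb R^+$. Assume that every $f\in\mathcal A$ satisfies $$\int|f-m|\,d\mu\le\beta(s)\int\sqrt{\Gamma(f)}\,d\mu+s\,\mathrm{Osc}(f)\qquad\forall s\in(0,1),$$ where $m$ is a median of $f$ under $\mu$. Then every $f\in\mathcal A$ satisfies $$\mathrm{Var}_\mu(f)\le4\beta\Big(\frac s2\Big)^2\int\Gamma(f)\,d\mu+s\,\mathrm{Osc}(f)^2\qquad\forall s\in(0,1/4).$$
   Context: Standing framework: $\mu$ a probability measure on a Polish space $E$, $L$ a $\mu$-symmetric diffusion operator with an algebra $\mathcal A$ of bounded functions containing constants, and carré du champ $\Gamma(f)=\Gamma(f,f)$ where $\Gamma(f,g)=\frac12(L(fg)-fLg-gLf)$, satisfying the chain rule (in particular $\Gamma(f^2)=4f^2\Gamma(f)$). $\mathrm{Osc}(f)=\operatorname{ess\,sup}f-\operatorname{ess\,inf}f$. *)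

From HB Require Import structures.
From mathcomp Require Import all_boot all_order all_algebra.
From mathcomp Require Import all_classical all_reals all_analysis ess_sup_inf.
Set Implicit Arguments. Unset Strict Implicit. Unset Printing Implicit Defensive.
Import Order.TTheory GRing.Theory Num.Theory.
Import numFieldNormedType.Exports.
Local Open Scope classical_set_scope.
Local Open Scope ring_scope.

Section defs.
Context d (T : measurableType d) (R : realType).

Definition Gam (L : (T -> R) -> (T -> R)) (f g : T -> R) : T -> R :=
  fun x => (L (fun y => f y * g y) x - f x * L g x - g x * L f x) / 2.

Definition is_median (mu : probability T R) (f : T -> R) (m : R) : Prop :=
  ((2^-1)%:E <= mu [set x | (m <= f x)%R])%E /\
  ((2^-1)%:E <= mu [set x | (f x <= m)%R])%E.

Definition Osc (mu : probability T R) (f : T -> R) : R :=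
  fine (ess_sup mu (EFin \o f) - ess_inf mu (EFin \o f))%E.

Definition Var (mu : probability T R) (f : T -> R) : R :=
  \int[mu]_x (f x - \int[mu]_y f y) ^+ 2.

(* D is the sequence of successive derivatives of D 0 (so D 0 is C^infinity) *)
Definition derivs_seq (D : nat -> R -> R) : Prop :=
  forall (n : nat) (x : R), is_derive x 1 (D n) (D n.+1 x).

Record diffusion_framework (mu : probability T R) (A : set (T -> R))
    (L : (T -> R) -> (T -> R)) : Prop := {
  A_meas : forall f, A f -> measurable_fun setT f;
  A_bdd : forall f, A f -> exists M : R, forall x, `|f x| <= M;
  A_cst : forall c : R, A (fun _ => c);
  A_add : forall f g, A f -> A g -> A (fun x => f x + g x);
  A_mul : forall f g, A f -> A g -> A (fun x => f x * g x);
  L_A : forall f, A f -> A (L f);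
  L_add : forall f g, A f -> A g -> L (fun x => f x + g x) = (fun x => L f x + L g x);
  L_scale : forall (c : R) f, A f -> L (fun x => c * f x) = (fun x => c * L f x);
  L_sym : forall f g, A f -> A g ->
    \int[mu]_x (f x * L g x) = \int[mu]_x (g x * L f x);
  Gam_ge0 : forall f, A f -> forall x, 0 <= Gam L f f x;
  A_smooth : forall D, derivs_seq D -> forall f, A f -> A (D 0%N \o f);
  Gam_chain : forall D, derivs_seq D -> forall f g, A f -> A g ->
    Gam L (D 0%N \o f) g = (fun x => D 1%N (f x) * Gam L f g x)
}.

End defs.

From HB Require Import structures.
From mathcomp Require Import all_boot all_order all_algebra.
From mathcomp Require Import all_classical all_reals all_analysis ess_sup_inf.
From mathcomp Require Import lra ring measurable_realfun.
Import Order.TTheory GRing.Theory Num.Theory.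
Import numFieldNormedType.Exports.
Local Open Scope classical_set_scope.
Local Open Scope ring_scope.

Set Implicit Arguments.
Unset Strict Implicit.
Unset Printing Implicit Defensive.

(* Let m be a median of f.  For e > 0 the smooth nondecreasing map
   Phi(x) = (x - m) sqrt ((x - m)^2 + e^2) regularises (x - m)|x - m|, so that
   Phi(f) has median 0, |Phi(f)| >= (f - m)^2, Osc(Phi(f)) <= Osc(f)^2 + e Osc(f),
   and by the chain rule sqrt Gamma(Phi(f)) = Phi'(f) sqrt Gamma(f) with
   0 <= Phi' <= 2(|x - m| + e).  The L^1 hypothesis for Phi(f) at level s/2,
   with 2 beta |f - m| sqrt Gamma(f) absorbed by AM-GM into half of (f - m)^2,
   bounds int (f - m)^2 by the claimed right-hand side up to O(e); let e -> 0 and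
   use Var(f) <= int (f - m)^2. *)

Section derivable_n.
Variable R : realType.
Implicit Types f g h : R -> R.

Fixpoint derivable_n (n : nat) f : Prop :=
  if n is n'.+1 then (forall x, derivable f x 1) /\ derivable_n n' (derive1 f)
  else True.

Lemma derivable_nW n f : derivable_n n.+1 f -> derivable_n n f.
Proof. by elim: n f => [//|n IH] f [df /IH]. Qed.

Lemma derivable_n_cst n (c : R) : derivable_n n (fun _ => c).
Proof.
elim: n c => [//|n IH] c; split => [x|]; first exact: derivable_cst.
suff -> : derive1 (fun _ : R => c) = fun _ => 0 by exact: IH.
by apply/funext => x; rewrite derive1E derive_cst.
Qed.

Lemma derivable_n_subr n (c : R) : derivable_n n (fun x => x - c).
Proof.
case: n => [//|n]; split => [x|]; first exact: derivableB.
suff -> : derive1 (fun x => x - c) = fun _ => 1 by exact: derivable_n_cst.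
by apply/funext => x; rewrite derive1E deriveB // derive_id derive_cst subr0.
Qed.

Lemma derivable_nD n f g :
  derivable_n n f -> derivable_n n g -> derivable_n n (fun x => f x + g x).
Proof.
elim: n f g => [//|n IH] f g [df Hf] [dg Hg]; split => [x|].
  exact: derivableD (df x) (dg x).
suff -> : derive1 (fun x => f x + g x) = fun x => derive1 f x + derive1 g x.
  exact: IH.
by apply/funext => x; rewrite !derive1E (deriveD (df x) (dg x)).
Qed.

Lemma derivable_nM n f g :
  derivable_n n f -> derivable_n n g -> derivable_n n (fun x => f x * g x).
Proof.
elim: n f g => [//|n IH] f g [df Hf] [dg Hg]; split => [x|].
  exact: derivableM (df x) (dg x).
suff -> : derive1 (fun x => f x * g x) =
    fun x => f x * derive1 g x + g x * derive1 f x.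
  by apply: derivable_nD; apply: IH => //; exact: derivable_nW.
by apply/funext => x; rewrite !derive1E (deriveM (df x) (dg x)).
Qed.

Lemma derivable_nV n h : (forall x, h x != 0) ->
  derivable_n n h -> derivable_n n (fun x => (h x)^-1).
Proof.
move=> h0; elim: n h h0 => [//|n IH] h h0 [dh Hh]; split => [x|].
  exact: derivableV (h0 x) (dh x).
suff -> : derive1 (fun x => (h x)^-1) =
    fun x => (-1 * derive1 h x) * ((h x)^-1 * (h x)^-1).
  apply: derivable_nM; last by apply: derivable_nM; apply: IH => //; exact: derivable_nW.
  exact: (derivable_nM (derivable_n_cst _ (-1)) Hh).
apply/funext => x; rewrite !derive1E (deriveV (h0 x) (dh x)).
by rewrite -invrM ?unitfE ?h0 // -expr2 mulN1r mulNr mulrC -scaleNr.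
Qed.

Lemma is_derive_sqrt_comp h (x dh : R) : is_derive x 1 h dh -> 0 < h x ->
  is_derive x 1 (fun y => Num.sqrt (h y)) ((2 * Num.sqrt (h x))^-1 * dh).
Proof.
move=> [dhx <-] hx0; have [dsqrt _] := is_derive1_sqrt hx0.
split; first by apply/derivable1_diffP; apply: differentiable_comp; exact/derivable1_diffP.
by rewrite -derive1E (derive1_comp dhx dsqrt) !derive1E derive_sqrt.
Qed.

Lemma derivable_n_sqrt n h : (forall x, 0 < h x) ->
  derivable_n n h -> derivable_n n (fun x => Num.sqrt (h x)).
Proof.
move=> h0; elim: n h h0 => [//|n IH] h h0 [dh Hh].
have ds x := is_derive_sqrt_comp (derivableP (dh x)) (h0 x).
split => [x|]; first by case: (ds x).
suff -> : derive1 (fun x => Num.sqrt (h x)) =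
    fun x => (2 * Num.sqrt (h x))^-1 * derive1 h x.
  apply: derivable_nM => //; apply: derivable_nV.
    by move=> x; rewrite mulf_neq0 // gt_eqF // sqrtr_gt0.
  by apply: derivable_nM (derivable_n_cst _ _) _; apply: IH => //; exact: derivable_nW.
by apply/funext => x; rewrite !derive1E; case: (ds x) => _ ->.
Qed.

Lemma derivs_seq_iter_derive1 f : (forall n, derivable_n n f) ->
  derivs_seq (fun n => iter n (@derive1 _ R) f).
Proof.
move=> df n x; rewrite iterS derive1E; apply: derivableP.
elim: n f df => [|n IH] f df; first by have [] := df 1%N.
rewrite iterSr; apply: IH => k; by have [] := df k.+1.
Qed.

End derivable_n.

Section signed_sqr.
Variables (R : realType) (m e : R).
Hypothesis e_gt0 : 0 < e.

Definition hypot (y : R) := Num.sqrt (y * y + e * e).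

(* Regularises x |-> (x - m) |x - m|, which is only C^1 whereas the chain rule
   of the framework is available for C^oo maps only. *)
Definition signed_sqr (x : R) := (x - m) * hypot (x - m).

Lemma hypot_radicand_gt0 y : 0 < y * y + e * e.
Proof. by rewrite ltr_wpDl ?mulr_gt0 // -expr2 sqr_ge0. Qed.

Lemma hypot_gt0 y : 0 < hypot y.
Proof. by rewrite sqrtr_gt0 hypot_radicand_gt0. Qed.

Lemma hypot_sqr y : hypot y ^+ 2 = y * y + e * e.
Proof. by rewrite sqr_sqrtr // ltW // hypot_radicand_gt0. Qed.

Lemma hypot_N y : hypot (- y) = hypot y.
Proof. by rewrite /hypot mulrNN. Qed.

Lemma norm_le_hypot y : `|y| <= hypot y.
Proof.
rewrite -(ger0_norm (ltW (hypot_gt0 y))) -ler_sqr ?nnegrE // !real_normK ?num_real // hypot_sqr.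
by rewrite expr2 lerDl mulr_ge0 // ltW.
Qed.

Lemma hypot_le y : hypot y <= `|y| + e.
Proof.
have ye : 0 <= `|y| + e by rewrite addr_ge0 // ltW.
rewrite -(ger0_norm ye) -sqrtr_sqr; apply: ler_wsqrtr.
by rewrite sqrrD real_normK ?num_real // -!expr2 lerD2r lerDl mulrn_wge0 // mulr_ge0 // ltW.
Qed.

Lemma le_hypot y z : 0 <= y <= z -> hypot y <= hypot z.
Proof. by move=> /andP[y0 yz]; apply: ler_wsqrtr; rewrite lerD2r ler_pM. Qed.

Lemma signed_sqr_ge0 x : (0 <= signed_sqr x) = (m <= x).
Proof. by rewrite pmulr_lge0 ?hypot_gt0 // subr_ge0. Qed.

Lemma signed_sqr_le0 x : (signed_sqr x <= 0) = (x <= m).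
Proof. by rewrite pmulr_lle0 ?hypot_gt0 // subr_le0. Qed.

Lemma sqr_le_norm_signed_sqr x : (x - m) ^+ 2 <= `|signed_sqr x|.
Proof.
rewrite normrM (gtr0_norm (hypot_gt0 _)) -real_normK ?num_real // expr2.
by rewrite ler_wpM2l ?norm_le_hypot.
Qed.

Lemma signed_sqr_nondecreasing : {homo signed_sqr : x z / x <= z}.
Proof.
move=> x z xz; rewrite /signed_sqr.
have hx := hypot_gt0 (x - m); have hz := hypot_gt0 (z - m).
have [x0|x0] := leP 0 (x - m).
  have := @le_hypot (x - m) (z - m); rewrite x0 lerD2r xz => /(_ isT); nra.
have [z0|z0] := leP 0 (z - m); first nra.
have := @le_hypot (- (z - m)) (- (x - m)); rewrite !hypot_N lerN2 lerD2r xz.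
rewrite oppr_ge0 (ltW z0) => /(_ isT); nra.
Qed.

Lemma signed_sqr_sub_le a b : a <= m <= b ->
  signed_sqr b - signed_sqr a <= (b - a) ^+ 2 + e * (b - a).
Proof.
move=> /andP[am mb]; rewrite /signed_sqr.
have hb := hypot_le (b - m); have ha := hypot_le (a - m).
rewrite ger0_norm ?subr_ge0 // in hb; rewrite ler0_norm ?subr_le0 // in ha.
have := hypot_gt0 (b - m); have := hypot_gt0 (a - m).
rewrite expr2; nra.
Qed.

Lemma is_derive_signed_sqr (x : R) : is_derive x 1 signed_sqr
  ((x - m) ^+ 2 / hypot (x - m) + hypot (x - m)).
Proof.
have dy : is_derive x 1 (fun x => x - m) 1 by exact: is_derive_shift.
have dr : is_derive x 1 (fun x => (x - m) * (x - m) + e * e) (2 * (x - m)).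
  by apply: is_derive_eq; rewrite addr0 -mulr2n mulr_natl; congr (_ *+ 2); exact: mulr1.
have dh := is_derive_sqrt_comp dr (hypot_radicand_gt0 (x - m)).
apply: is_derive_eq.
change ((x - m) * ((2 * hypot (x - m))^-1 * (2 * (x - m))) + hypot (x - m) * 1
  = (x - m) ^+ 2 / hypot (x - m) + hypot (x - m)).
by field; rewrite gt_eqF ?hypot_gt0.
Qed.

Lemma derive1_signed_sqr_ge0_le x :
  0 <= derive1 signed_sqr x <= 2 * (`|x - m| + e).
Proof.
rewrite derive1E; case: (is_derive_signed_sqr x) => _ ->.
have h0 := hypot_gt0 (x - m); have hle := hypot_le (x - m).
have q : (x - m) ^+ 2 / hypot (x - m) <= hypot (x - m).
  by rewrite ler_pdivrMr // -expr2 hypot_sqr expr2 lerDl mulr_ge0 // ltW.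
rewrite addr_ge0 ?divr_ge0 ?sqr_ge0 ?(ltW h0) //=; lra.
Qed.

Lemma derivable_n_signed_sqr n : derivable_n n signed_sqr.
Proof.
have dy := derivable_n_subr n m.
apply: (derivable_nM dy); apply: derivable_n_sqrt => [x|].
  exact: hypot_radicand_gt0.
exact: derivable_nD (derivable_nM dy dy) (derivable_n_cst n _).
Qed.

End signed_sqr.

Lemma ler_add_invrP (R : realType) (a b : R) :
  (forall n : nat, a <= b + n.+1%:R^-1) -> a <= b.
Proof.
move=> ab; rewrite leNgt; apply/negP => /ltr_add_invr[n].
by rewrite ltNge ab.
Qed.

Lemma set_ge_bigcapE (T : Type) (R : realType) (f : T -> R) (a : R) :
  [set x | a <= f x] = \bigcap_n [set x | a - n.+1%:R^-1 <= f x].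
Proof.
apply/seteqP; split => x /=; first by move=> afx n _ /=; rewrite lerBlDr ler_wpDr.
by move=> afx; apply: ler_add_invrP => n; rewrite -lerBlDr; exact: afx.
Qed.

Lemma set_le_bigcapE (T : Type) (R : realType) (f : T -> R) (a : R) :
  [set x | f x <= a] = \bigcap_n [set x | f x <= a + n.+1%:R^-1].
Proof.
apply/seteqP; split => x /=; first by move=> fxa n _ /=; rewrite ler_wpDr.
by move=> fxa; apply: ler_add_invrP => n; exact: fxa.
Qed.

Section bounded_measurable.
Context d {T : measurableType d} {R : realType}.
Implicit Types h : T -> R.

Definition bounded_measurable h :=
  measurable_fun setT h /\ exists M : R, forall x, `|h x| <= M.

Lemma bounded_measurable_cst (c : R) : bounded_measurable (fun _ => c).
Proof. by split; [exact: measurable_cst | exists `|c|]. Qed.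

Lemma bounded_measurableD h1 h2 : bounded_measurable h1 -> bounded_measurable h2 ->
  bounded_measurable (fun x => h1 x + h2 x).
Proof.
move=> [m1 [M1 b1]] [m2 [M2 b2]]; split; first exact: measurable_funD.
by exists (M1 + M2) => x; rewrite (le_trans (ler_normD _ _)) ?lerD.
Qed.

Lemma bounded_measurableM h1 h2 : bounded_measurable h1 -> bounded_measurable h2 ->
  bounded_measurable (fun x => h1 x * h2 x).
Proof.
move=> [m1 [M1 b1]] [m2 [M2 b2]]; split; first exact: measurable_funM.
by exists (M1 * M2) => x; rewrite normrM ler_pM.
Qed.

Lemma bounded_measurableN h : bounded_measurable h ->
  bounded_measurable (fun x => - h x).
Proof.
move=> [mh [M hM]]; split; first exact: measurableT_comp.
by exists M => x; rewrite normrN.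
Qed.

Lemma bounded_measurableB h1 h2 : bounded_measurable h1 -> bounded_measurable h2 ->
  bounded_measurable (fun x => h1 x - h2 x).
Proof. by move=> b1 /bounded_measurableN; exact: bounded_measurableD. Qed.

Lemma bounded_measurable_norm h : bounded_measurable h ->
  bounded_measurable (fun x => `|h x|).
Proof.
move=> [mh [M hM]]; split; first exact: measurableT_comp.
by exists M => x; rewrite normr_id.
Qed.

Lemma bounded_measurable_sqrt h : bounded_measurable h ->
  bounded_measurable (fun x => Num.sqrt (h x)).
Proof.
move=> [mh [M hM]]; split.
  exact: measurableT_comp (continuous_measurable_fun (@sqrt_continuous R)) mh.
exists (1 + M) => x; rewrite ger0_norm ?sqrtr_ge0 //.
have [hx0|hx0] := leP 0 (h x); last by rewrite ltr0_sqrtr // addr_ge0 // (le_trans _ (hM x)).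
have := hM x; rewrite ger0_norm // => hxM.
have := sqr_sqrtr hx0; have := sqrtr_ge0 (h x); rewrite expr2; nra.
Qed.

Lemma bounded_measurable_integrable (mu : probability T R) h :
  bounded_measurable h -> mu.-integrable setT (EFin \o h).
Proof.
move=> [mh [M hM]]; apply: measurable_bounded_integrable => //.
  exact: le_lt_trans (probability_le1 mu measurableT) (ltry _).
exists M; split; first by rewrite num_real.
by move=> M' MM' x _; exact: le_trans (hM x) (ltW MM').
Qed.

End bounded_measurable.

Section median.
Context d (T : measurableType d) (R : realType) (mu : probability T R).
Implicit Types (f h : T -> R) (a b c : R).

Lemma measurable_ge f a : measurable_fun setT f -> measurable [set x | a <= f x].
Proof.
move=> mf; have := mf measurableT _ (measurable_itv `[a, +oo[); rewrite setTI.
by congr measurable; apply/seteqP; split => x /=; rewrite in_itv /= andbT.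
Qed.

Lemma measurable_le f a : measurable_fun setT f -> measurable [set x | f x <= a].
Proof.
move=> mf; have := mf measurableT _ (measurable_itv `]-oo, a]); rewrite setTI.
by congr measurable; apply/seteqP; split => x /=; rewrite in_itv.
Qed.

Lemma probability_bigcap_ge (F : (set T)^nat) (l : \bar R) :
  (forall n, measurable (F n)) -> nonincreasing_seq F ->
  (forall n, l <= mu (F n))%E -> (l <= mu (\bigcap_n F n))%E.
Proof.
move=> mF niF lF.
have muF0 : (mu (F 0%N) < +oo)%E.
  exact: le_lt_trans (probability_le1 mu (mF 0%N)) (ltry _).
have cvgF := nonincreasing_cvg_mu muF0 mF (bigcapT_measurable mF) niF.
rewrite -(cvg_lim _ cvgF) //; apply: lime_ge; first by apply/cvg_ex; exists (mu (\bigcap_n F n)).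
exact: nearW.
Qed.

Lemma probability_setC_ge_half (A : set T) : measurable A ->
  (mu A <= (2^-1)%:E)%E -> ((2^-1)%:E <= mu (~` A))%E.
Proof.
move=> mA; rewrite probability_setC // -(fineK (fin_num_measure mu _ mA)).
by rewrite -EFinB !lee_fin; lra.
Qed.

Lemma median_exists f : bounded_measurable f -> exists m, is_median mu f m.
Proof.
move=> [mf [M fM]].
pose S := [set t : R | ((2^-1)%:E <= mu [set x | (t <= f x)%R])%E].
have SM : S (- M).
  rewrite /S /= (_ : [set x | - M <= f x] = setT) ?probability_setT.
    by rewrite lee_fin invf_le1 // ler1n.
  by apply/seteqP; split => x //= _; move: (fM x); rewrite ler_norml => /andP[].
have ubS : ubound S M.
  move=> t St; rewrite leNgt; apply/negP => Mt; move: St; rewrite /S /=.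
  rewrite (_ : [set x | t <= f x] = set0) ?measure0 ?lee_fin ?leNgt ?invr_gt0 ?ltr0n //.
  apply/seteqP; split => x //= tx; move: (fM x); rewrite ler_norml => /andP[_].
  by apply/negP; rewrite -ltNge (lt_le_trans Mt tx).
have supS : has_sup S by split; [exists (- M) | exists M].
have inv_gt0 n : 0 < n.+1%:R^-1 :> R by rewrite invr_gt0.
have inv_le n k : (n <= k)%N -> k.+1%:R^-1 <= n.+1%:R^-1 :> R.
  by move=> nk; rewrite lef_pV2 ?posrE // ler_nat.
exists (sup S); split.
- rewrite set_ge_bigcapE; apply: probability_bigcap_ge => [n|n k nk|n].
  + exact: measurable_ge.
  + by rewrite subsetEset => x /=; apply: le_trans; rewrite lerD2l lerN2 inv_le.
  have [t St tS] := sup_adherent (inv_gt0 n) supS.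
  apply: le_trans St _; apply: le_measure; rewrite ?inE; try exact: measurable_ge.
  by move=> x /=; apply: le_trans; exact: ltW.
- rewrite set_le_bigcapE; apply: probability_bigcap_ge => [n|n k nk|n].
  + exact: measurable_le.
  + by rewrite subsetEset => x /= /le_trans; apply; rewrite lerD2l inv_le.
  have notS : ~ S (sup S + n.+1%:R^-1).
    by move=> /(sup_upper_bound supS); rewrite gerDl leNgt inv_gt0.
  have /ltW/probability_setC_ge_half :
      (mu [set x | (sup S + n.+1%:R^-1 <= f x)%R] < (2^-1)%:E)%E.
    by rewrite ltNge; apply/negP.
  move=> /(_ (measurable_ge _ mf)) /le_trans; apply; apply: le_measure; rewrite ?inE.
  + exact/measurableC/measurable_ge.
  + exact: measurable_le.
  by move=> x /= /negP; rewrite -ltNge => /ltW.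
Qed.

End median.

Section oscillation.
Context d (T : measurableType d) (R : realType) (mu : probability T R).
Implicit Types (f h : T -> R) (a b c : R).

Let muT_gt0 : (0 < mu setT)%E.
Proof. by rewrite probability_setT lte01. Qed.

Lemma ess_sup_bounded h (M : R) : (forall x, `|h x| <= M) ->
  exists b, ess_sup mu (EFin \o h) = b%:E.
Proof.
move=> hM; have [Mh hM'] : (forall x, (- M)%:E <= (h x)%:E)%E /\ (forall x, (h x)%:E <= M%:E)%E.
  by split=> x; rewrite lee_fin; have := hM x; rewrite ler_norml => /andP[].
case: ess_sup (ess_sup_ler mu hM') (ess_sup_ger muT_gt0 Mh) => // b _ _.
by exists b.
Qed.

Lemma ess_inf_bounded h (M : R) : (forall x, `|h x| <= M) ->
  exists a, ess_inf mu (EFin \o h) = a%:E.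
Proof.
move=> hM; have [Mh hM'] : (forall x, (- M)%:E <= (h x)%:E)%E /\ (forall x, (h x)%:E <= M%:E)%E.
  by split=> x; rewrite lee_fin; have := hM x; rewrite ler_norml => /andP[].
have infM : (ess_inf mu (EFin \o h) <= M%:E)%E.
  by rewrite -(ess_inf_cst M%:E muT_gt0); apply: le_ess_inf; exact: nearW.
case: ess_inf (ess_inf_ler mu Mh) infM => // a _ _.
by exists a.
Qed.

Lemma median_le_ess_sup h c : measurable_fun setT h -> is_median mu h c ->
  (c%:E <= ess_sup mu (EFin \o h))%E.
Proof.
move=> mh [hc _]; rewrite leNgt; apply/negP => supc.
have [N [mN N0 sN]] := ess_sup_ge mu (EFin \o h).
suff : (mu [set x | (c <= h x)%R] <= 0)%E.
  by move=> /(le_trans hc); rewrite lee_fin leNgt invr_gt0 ltr0n.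
rewrite -N0; apply: le_measure; rewrite ?inE; [exact: measurable_ge | exact: mN |].
move=> x /= cx; apply: sN => /= /le_lt_trans /(_ supc).
by rewrite lte_fin ltNge cx.
Qed.

Lemma ess_inf_le_median h c : measurable_fun setT h -> is_median mu h c ->
  (ess_inf mu (EFin \o h) <= c%:E)%E.
Proof.
move=> mh [_ hc]; rewrite leNgt; apply/negP => cinf.
have [N [mN N0 sN]] := ess_inf_le mu (EFin \o h).
suff : (mu [set x | (h x <= c)%R] <= 0)%E.
  by move=> /(le_trans hc); rewrite lee_fin leNgt invr_gt0 ltr0n.
rewrite -N0; apply: le_measure; rewrite ?inE; [exact: measurable_le | exact: mN |].
move=> x /= xc; apply: sN => /= /(lt_le_trans cinf).
by rewrite lte_fin ltNge xc.
Qed.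

Lemma Osc_comp_le (P : R -> R) f a b : {homo P : x y / x <= y} ->
  (exists M : R, forall x, `|P (f x)| <= M) ->
  ess_inf mu (EFin \o f) = a%:E -> ess_sup mu (EFin \o f) = b%:E ->
  Osc mu (P \o f) <= P b - P a.
Proof.
move=> Pmono [M PM] fa fb.
have [b' Pb'] := ess_sup_bounded PM; have [a' Pa'] := ess_inf_bounded PM.
rewrite /Osc Pb' Pa' -EFinB /=; apply: lerB.
  rewrite -lee_fin -Pb'; apply/ess_supP.
  have := ess_sup_ge mu (EFin \o f); rewrite fb; apply: filterS => x /=.
  by rewrite !lee_fin; exact: Pmono.
rewrite -lee_fin -Pa'; apply/ess_infP.
have := ess_inf_le mu (EFin \o f); rewrite fa; apply: filterS => x /=.
by rewrite !lee_fin; exact: Pmono.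
Qed.

End oscillation.

Lemma Var_le_integral_sqr_sub d (T : measurableType d) (R : realType)
    (mu : probability T R) (f : T -> R) (c : R) :
  bounded_measurable f -> Var mu f <= \int[mu]_x (f x - c) ^+ 2.
Proof.
move=> bf; rewrite /Var; set E := \int[mu]_y f y.
have bi h := @bounded_measurable_integrable _ _ _ mu h.
have bcst := @bounded_measurable_cst _ T R.
have b2f := bounded_measurableM (bcst 2) bf.
have bl := bounded_measurableB b2f (bcst (c + E)).
have bfE := bounded_measurableB bf (bcst E).
have -> : \int[mu]_x (f x - c) ^+ 2 =
    \int[mu]_x ((f x - E) ^+ 2 + (E - c) * (2 * f x - (c + E))).
  by apply: eq_Rintegral => x _; ring.
rewrite (RintegralD _ (bi _ (bounded_measurableM bfE bfE))
  (bi _ (bounded_measurableM (bcst (E - c)) bl))) //.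
rewrite (RintegralZl _ measurableT (bi _ bl)) // (RintegralB _ (bi _ b2f) (bi _ (bcst _))) //.
rewrite (RintegralZl _ measurableT (bi _ bf)) // Rintegral_cst //.
rewrite (_ : fine (mu setT) = 1) ?probability_setT // mulr1 -/E.
by rewrite lerDl (_ : 2 * E - (c + E) = E - c) -?expr2 ?sqr_ge0 //; ring.
Qed.

Lemma ler_addgt0Pr_scaled (R : realFieldType) (x y K : R) :
  (forall e, 0 < e -> x <= y + e * K) -> x <= y.
Proof.
move=> xy; apply/ler_addgt0Pr => eps eps_gt0.
have K1_gt0 : 0 < `|K| + 1 by rewrite ltr_wpDl.
apply: le_trans (xy _ (divr_gt0 eps_gt0 K1_gt0)) _; rewrite lerD2l.
by rewrite mulrAC ler_pdivrMr // ler_pM2l // (le_trans (ler_norm K)) // lerDl.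
Qed.

(* AM-GM in the form 2 B |y| r <= y^2 / 2 + 2 B^2 r^2. *)
Lemma AMGM_signed_sqr (R : realFieldType) (B y e r D : R) :
  0 <= B -> 0 <= r -> 0 <= D <= 2 * (`|y| + e) ->
  B * (D * r) <= y ^+ 2 / 2 + 2 * B ^+ 2 * r ^+ 2 + 2 * B * e * r.
Proof.
move=> B_ge0 r_ge0 /andP[D_ge0 D_le].
have : B * (D * r) <= B * (2 * (`|y| + e) * r) by rewrite ler_wpM2l // ler_wpM2r.
have := sqr_ge0 (`|y| - 2 * B * r); rewrite -(real_normK (num_real y)).
have := normr_ge0 y; nra.
Qed.

Section carre_du_champ.
Context d (T : measurableType d) (R : realType) (mu : probability T R)
  (A : set (T -> R)) (L : (T -> R) -> (T -> R)).
Hypothesis FW : diffusion_framework mu A L.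

Lemma Gam_sym f g : Gam L f g = Gam L g f.
Proof.
rewrite /Gam (_ : (fun y => f y * g y) = (fun y => g y * f y)).
  by apply/funext => x; congr (_ / 2); rewrite addrAC.
by apply/funext => y; rewrite mulrC.
Qed.

Lemma Gam_comp_sqr D f : derivs_seq D -> A f ->
  forall x, Gam L (D 0%N \o f) (D 0%N \o f) x = D 1%N (f x) ^+ 2 * Gam L f f x.
Proof.
move=> dD Af x; have ADf := A_smooth FW dD Af.
by rewrite (Gam_chain FW dD Af ADf) Gam_sym (Gam_chain FW dD Af Af) /= mulrA expr2.
Qed.

Lemma bounded_measurable_A u : A u -> bounded_measurable u.
Proof. by move=> Au; split; [exact: A_meas FW _ Au | exact: A_bdd FW _ Au]. Qed.

Lemma bounded_measurable_Gam u : A u -> bounded_measurable (Gam L u u).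
Proof.
move=> Au; have bu := bounded_measurable_A Au.
have bLu := bounded_measurable_A (L_A FW Au).
have bLuu := bounded_measurable_A (L_A FW (A_mul FW Au Au)).
apply: (bounded_measurableM _ (bounded_measurable_cst 2^-1)).
by apply: bounded_measurableB; [apply: bounded_measurableB bLuu _|];
  exact: bounded_measurableM.
Qed.

End carre_du_champ.

Lemma is_median_signed_sqr d (T : measurableType d) (R : realType)
    (mu : probability T R) (f : T -> R) (m e : R) :
  0 < e -> is_median mu f m -> is_median mu (signed_sqr m e \o f) 0.
Proof.
move=> e_gt0 [fm1 fm2]; split.
  by rewrite (_ : [set x | _] = [set x | m <= f x]) //; apply/seteqP; split => x;
    rewrite /= signed_sqr_ge0.
by rewrite (_ : [set x | _] = [set x | f x <= m]) //; apply/seteqP; split => x;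
  rewrite /= signed_sqr_le0.
Qed.

Section signed_sqr_median_argument.
Context d (T : measurableType d) (R : realType) (mu : probability T R)
  (A : set (T -> R)) (L : (T -> R) -> (T -> R)).
Hypothesis FW : diffusion_framework mu A L.
Variables (B t : R).
Hypotheses (B_ge0 : 0 <= B) (t_ge0 : 0 <= t).
Hypothesis median_L1 : forall g, A g -> forall c, is_median mu g c ->
  \int[mu]_x `|g x - c| <= B * \int[mu]_x Num.sqrt (Gam L g g x) + t * Osc mu g.
Variables (f : T -> R) (m e : R).
Hypotheses (Af : A f) (fm : is_median mu f m) (e_gt0 : 0 < e).

Let Phi := signed_sqr m e.
Let D n := iter n (@derive1 _ R) Phi.
Let dD : derivs_seq D := derivs_seq_iter_derive1 (derivable_n_signed_sqr m e_gt0).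
Let g := Phi \o f.
Let Ag : A g := A_smooth FW dD Af.
Let bf := bounded_measurable_A FW Af.
Let bGf := bounded_measurable_Gam FW Af.

Lemma sqrt_Gam_signed_sqr x :
  Num.sqrt (Gam L g g x) = derive1 Phi (f x) * Num.sqrt (Gam L f f x).
Proof.
have /andP[dPhi_ge0 _] := derive1_signed_sqr_ge0_le m e_gt0 (f x).
by rewrite (Gam_comp_sqr FW dD Af) sqrtrM ?sqr_ge0 // sqrtr_sqr ger0_norm.
Qed.

Lemma integral_sqrt_Gam_signed_sqr_le :
  B * \int[mu]_x Num.sqrt (Gam L g g x) <=
  (\int[mu]_x (f x - m) ^+ 2) / 2 + 2 * B ^+ 2 * \int[mu]_x Gam L f f x
  + 2 * B * e * \int[mu]_x Num.sqrt (Gam L f f x).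
Proof.
have bi h := @bounded_measurable_integrable _ _ _ mu h.
have bcst := @bounded_measurable_cst _ T R.
have bfm := bounded_measurableB bf (bcst m).
have b1 := bounded_measurableM (bounded_measurableM bfm bfm) (bcst 2^-1).
have b2 := bounded_measurableM (bcst (2 * B ^+ 2)) bGf.
have b3 := bounded_measurableM (bcst (2 * B * e)) (bounded_measurable_sqrt bGf).
have bsg := bounded_measurable_sqrt (bounded_measurable_Gam FW Ag).
rewrite -(RintegralZl _ measurableT (bi _ bsg)).
rewrite -(RintegralZr _ measurableT (bi _ (bounded_measurableM bfm bfm))).
rewrite -(RintegralZl _ measurableT (bi _ bGf)).
rewrite -(RintegralZl _ measurableT (bi _ (bounded_measurable_sqrt bGf))).
rewrite -(RintegralD measurableT (bi _ b1) (bi _ b2)).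
rewrite -(RintegralD measurableT (bi _ (bounded_measurableD b1 b2)) (bi _ b3)).
apply: le_Rintegral => //.
- exact: bi _ (bounded_measurableM (bcst B) bsg).
- exact: bi _ (bounded_measurableD (bounded_measurableD b1 b2) b3).
move=> x _; rewrite sqrt_Gam_signed_sqr -{2}(sqr_sqrtr (Gam_ge0 FW Af x)) -expr2.
apply: AMGM_signed_sqr; rewrite ?sqrtr_ge0 //.
exact: derive1_signed_sqr_ge0_le.
Qed.

Lemma Osc_signed_sqr_le : Osc mu g <= Osc mu f ^+ 2 + e * Osc mu f.
Proof.
have [[mf [M fM]] [_ [M' gM]]] := (bf, bounded_measurable_A FW Ag).
have [a fa] := ess_inf_bounded mu fM; have [b fb] := ess_sup_bounded mu fM.
have Oab : Osc mu f = b - a by rewrite /Osc fa fb -EFinB.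
have amb : a <= m <= b.
  by rewrite -!lee_fin -fa -fb (ess_inf_le_median mf fm) (median_le_ess_sup mf fm).
apply: le_trans (Osc_comp_le (signed_sqr_nondecreasing m e_gt0) _ fa fb) _.
  by exists M'.
by rewrite Oab signed_sqr_sub_le.
Qed.

Lemma integral_sqr_sub_median_le :
  \int[mu]_x (f x - m) ^+ 2 <=
  4 * B ^+ 2 * \int[mu]_x Gam L f f x + 2 * t * Osc mu f ^+ 2
  + e * (4 * B * \int[mu]_x Num.sqrt (Gam L f f x) + 2 * t * Osc mu f).
Proof.
have bi h := @bounded_measurable_integrable _ _ _ mu h.
have g_med : is_median mu g 0 := is_median_signed_sqr e_gt0 fm.
have sqr_le_g : \int[mu]_x (f x - m) ^+ 2 <= \int[mu]_x `|g x - 0|.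
  have bfm := bounded_measurableB bf (bounded_measurable_cst m).
  have bg0 := bounded_measurableB (bounded_measurable_A FW Ag) (bounded_measurable_cst 0).
  apply: le_Rintegral => //; first exact: bi _ (bounded_measurableM bfm bfm).
    exact: bi _ (bounded_measurable_norm bg0).
  by move=> x _; rewrite subr0; exact: sqr_le_norm_signed_sqr.
have := le_trans sqr_le_g (median_L1 Ag g_med).
have := integral_sqrt_Gam_signed_sqr_le.
have := ler_wpM2l t_ge0 Osc_signed_sqr_le.
set X := \int[mu]_x (f x - m) ^+ 2; set G := \int[mu]_x Gam L f f x.
set S := \int[mu]_x Num.sqrt (Gam L f f x); set Sg := \int[mu]_x Num.sqrt (Gam L g g x).
set O := Osc mu f; set Og := Osc mu g.
lra.
Qed.

End signed_sqr_median_argument.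

Theorem mainTheorem20 (d : measure_display) (T : measurableType d) (R : realType)
  (mu : probability T R) (A : set (T -> R)) (L : (T -> R) -> (T -> R))
  (beta : R -> R) :
  diffusion_framework mu A L ->
  (forall s : R, 0 < s -> 0 <= beta s) ->
  (forall f, A f -> forall m : R, is_median mu f m ->
     forall s : R, 0 < s < 1 ->
       \int[mu]_x `|f x - m|
         <= beta s * \int[mu]_x Num.sqrt (Gam L f f x) + s * Osc mu f) ->
  forall f, A f -> forall s : R, 0 < s < 4^-1 ->
    Var mu f <= 4 * beta (s / 2) ^+ 2 * \int[mu]_x Gam L f f x
                + s * Osc mu f ^+ 2.
Proof.
move=> FW beta_ge0 median_L1 f Af s /andP[s_gt0 s_lt].
have bf := bounded_measurable_A FW Af.
have [m fm] := median_exists mu bf.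
have t_gt0 : 0 < s / 2 by rewrite divr_gt0.
have t_lt1 : s / 2 < 1 by lra.
have t01 : 0 < s / 2 < 1 by rewrite t_gt0 t_lt1.
have median_L1_t g Ag c gc := median_L1 g Ag c gc _ t01.
apply: le_trans (Var_le_integral_sqr_sub mu m bf) _.
apply: ler_addgt0Pr_scaled => e e_gt0.
have := integral_sqr_sub_median_le FW (beta_ge0 _ t_gt0) (ltW t_gt0) median_L1_t Af fm e_gt0.
by rewrite [2 * (s / 2)]mulrC divfK ?pnatr_eq0 //; apply.
Qed.
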